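(* Let $D\ge2$, let $C_1,\dots,C_D\subseteq\mathbb{F}_q^n$ be linear codes and let $C_1'\subseteq C_1$ be a linear subcode. Then $$\rho(C_1',C_2,\dots,C_D)\ge\frac{\rho(C_1,C_2,\dots,C_D)}{1+\rho(C_2,\dots,C_D)^{-1}}.$$
   Context: $\mathbb{F}_q$ is a finite field of characteristic 2. For a finite set $S$, $\mathbb{F}_q^S$ is the space of vectors indexed by $S$; $|v|$ is the Hamming weight and $\|v\|=|v|/|S|$. For a collection of $E$ linear codes $\mathcal{A}_1,\dots,\mathcal{A}_E\subseteq\mathbb{F}_q^n$: $\mathcal{L}_i$ is the set of lines in $[n]^E$ parallel to the $i$-th axis (sets $A_1\times\cdots\times A_E$ with $A_i=[n]$, $|A_j|=1$ for $j\ne i$); $\mathcal{A}^{(i)}=\{c\in\mathbb{F}_q^{[n]^E}:c|_\ell\in\mathcal{A}_i\ \forall\ell\in\mathcal{L}_i\}$; $\mathcal{A}_1\boxplus\cdots\boxplus\mathcal{A}_E=\sum_i\mathcal{A}^{(i)}$; for $x\in\mathbb{F}_q^{[n]^E}$, $|x|_i$ is the number of $\ell\in\mathcal{L}_i$ with $x|_\ell\ne0$ and $\|x\|_i=|x|_i/n^{E-1}$. The collection is $\rho$-product-expanding if every $c\in\mathcal{A}_1\boxplus\cdots\boxplus\mathcal{A}_E$ can be written $c=\sum_ia_i$, $a_i\in\mathcal{A}^{(i)}$, with $\rho\sum_i\|a_i\|_i\le\|c\|$; $\rho(\mathcal{A}_1,\dots,\mathcal{A}_E)$ is the maximal such $\rho$.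 *)

From HB Require Import structures.
From mathcomp Require Import all_boot all_order all_algebra all_field.
From mathcomp Require Import boolp classical_sets reals constructive_ereal ereal.
Set Implicit Arguments. Unset Strict Implicit. Unset Printing Implicit Defensive.
Import Order.TTheory GRing.Theory Num.Theory.
Local Open Scope ring_scope.

Section ProductExpansion.
Variables (F : finFieldType) (R : realType) (n E : nat).

Definition idx := {ffun 'I_E -> 'I_n}.
Definition word := {ffun idx -> F}.

Definition upd (p : idx) (i : 'I_E) (j : 'I_n) : idx :=
  [ffun k => if k == i then j else p k].

Definition lines (i : 'I_E) : {set {set idx}} :=
  [set [set upd p i j | j : 'I_n] | p : idx].

Definition restr (c : word) (i : 'I_E) (p : idx) : 'rV[F]_n :=
  \row_j c (upd p i j).

Definition in_dir (A : 'I_E -> {vspace 'rV[F]_n}) (i : 'I_E) (c : word) : Prop :=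
  forall p : idx, restr c i p \in A i.

Definition in_boxsum (A : 'I_E -> {vspace 'rV[F]_n}) (c : word) : Prop :=
  exists a : 'I_E -> word, (forall i, in_dir A i (a i)) /\ c = \sum_i a i.

Definition rnorm (c : word) : R := (#|[set p | c p != 0]|)%:R / (n ^ E)%:R.

Definition dnorm (i : 'I_E) (x : word) : R :=
  (#|[set l in lines i | [exists y in l, x y != 0]]|)%:R / (n ^ E.-1)%:R.

Definition prod_expanding (rho : R) (A : 'I_E -> {vspace 'rV[F]_n}) : Prop :=
  forall c, in_boxsum A c ->
    exists a : 'I_E -> word,
      [/\ forall i, in_dir A i (a i), c = \sum_i a i &
          rho * (\sum_i dnorm i (a i)) <= rnorm c].

(* rho(A_1,...,A_E): the maximal rho with A rho-product-expanding
   (as an extended real: +oo when every rho works, i.e. all codes are 0). *)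
Definition rho_pe (A : 'I_E -> {vspace 'rV[F]_n}) : \bar R :=
  ereal_sup [set r%:E | r in [set r : R | prod_expanding r A]].

End ProductExpansion.

Lemma tail_lt (D : nat) (i : 'I_D.-1) : (i.+1 < D)%N.
Proof. by case: D i => [|D] [i hi]. Qed.

Definition tail_codes (F : finFieldType) (n D : nat) (C : 'I_D -> {vspace 'rV[F]_n})
  : 'I_D.-1 -> {vspace 'rV[F]_n} := fun i => C (Ordinal (tail_lt i)).

Definition replace_first (F : finFieldType) (n D : nat) (C : 'I_D -> {vspace 'rV[F]_n})
  (C1' : {vspace 'rV[F]_n}) : 'I_D -> {vspace 'rV[F]_n} :=
  fun i => if val i == 0 then C1' else C i.

From HB Require Import structures.
From mathcomp Require Import all_boot all_order all_algebra all_field.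
From mathcomp Require Import boolp classical_sets reals constructive_ereal ereal.
From mathcomp Require Import lra.
Set Implicit Arguments. Unset Strict Implicit. Unset Printing Implicit Defensive.
Import Order.TTheory GRing.Theory Num.Theory.
Local Open Scope ring_scope.

(* Write c in C1' [+] C2 [+] ... [+] CD as c = sum_i b_i, and, using rho(C1, ..., CD),
   also as c = sum_i a_i with a_i in C^(i) of small total directional weight.  Let P be a
   projection onto C1' and apply I - P to the lines of a_1 in the first direction.  The
   remainder t = (I - P)_1 a_1 vanishes on every line where a_1 does, and, as (I - P)_1
   kills b_1 and preserves each C^(i) with i >= 2, t = (I - P)_1 sum_(i >= 2) (b_i - a_i)
   lies slice by slice in C2 [+] ... [+] CD.  Splitting these slices at cost
   1 / rho(C2, ..., CD) and adding the pieces to a_2, ..., a_D decomposes c over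
   (C1', C2, ..., CD), and the weight grows by at most the factor 1 + 1 / rho(C2, ..., CD). *)

Section Words.
Variables (F : finFieldType) (n E : nat).
Implicit Types (p : idx n E) (x y : word F n E) (i : 'I_E).

Lemma upd_id p i : upd p i (p i) = p.
Proof. by apply/ffunP => k; rewrite ffunE; case: eqP => // ->. Qed.

Lemma upd_upd p i j k : upd (upd p i j) i k = upd p i k.
Proof. by apply/ffunP => l; rewrite !ffunE; case: eqP. Qed.

Lemma upd_eq p i j : upd p i j i = j.
Proof. by rewrite ffunE eqxx. Qed.

Lemma upd_neq p i i' j : i' != i -> upd p i j i' = p i'.
Proof. by rewrite ffunE => /negbTE ->. Qed.

Lemma updC p i i' j k : i != i' -> upd (upd p i j) i' k = upd (upd p i' k) i j.
Proof.
move=> ne; apply/ffunP => l; rewrite !ffunE.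
case: (eqVneq l i') => [->|]; first by rewrite eq_sym (negbTE ne).
by case: (eqVneq l i).
Qed.

Lemma restrD x y i p : restr (x + y) i p = restr x i p + restr y i p.
Proof. by apply/rowP => k; rewrite !mxE ffunE. Qed.

Lemma restrB x y i p : restr (x - y) i p = restr x i p - restr y i p.
Proof. by apply/rowP => k; rewrite !mxE !ffunE. Qed.

Lemma restr_self x i p : restr x i p 0 (p i) = x p.
Proof. by rewrite mxE upd_id. Qed.

Lemma restr_neq0 x i p : (restr x i p != 0) = [exists j, x (upd p i j) != 0].
Proof.
apply/idP/idP => [|/existsP[j]].
  apply: contraR => /existsPn x0; apply/eqP/rowP => j.
  by rewrite !mxE; apply/eqP/negPn.
by apply: contra => /eqP/rowP/(_ j); rewrite !mxE => ->.
Qed.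

Definition wt x : nat := #|[set p | x p != 0]|.

Definition dir_wt i x : nat := #|[set p | restr x i p != 0]|.

Lemma wt_le_dir_wt i x : (wt x <= dir_wt i x)%N.
Proof.
apply: subset_leq_card; apply/fintype.subsetP => p; rewrite !inE -(restr_self x i).
by apply: contra => /eqP ->; rewrite mxE.
Qed.

Lemma dir_wtD i x y : (dir_wt i (x + y)%R <= dir_wt i x + dir_wt i y)%N.
Proof.
rewrite /dir_wt; apply: leq_trans (leq_card_setU _ _).
apply: subset_leq_card; apply/fintype.subsetP => p; rewrite !inE restrD.
by case: (eqVneq (restr x i p) 0) => [->|//]; rewrite add0r.
Qed.

Lemma dir_wt_supp i x y : (forall p, restr x i p = 0 -> restr y i p = 0) ->
  (dir_wt i y <= dir_wt i x)%N.
Proof.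
move=> xy; apply: subset_leq_card; apply/fintype.subsetP => p; rewrite !inE.
by apply: contra => /eqP /xy ->.
Qed.

Lemma card_idx_set (A : {set idx n E}) : (#|A| <= n ^ E)%N.
Proof. by apply: leq_trans (max_card _) _; rewrite card_ffun !card_ord. Qed.

Definition line i p : {set idx n E} := [set upd p i j | j : 'I_n].

Lemma line_self i p : p \in line i p.
Proof. by apply/imsetP; exists (p i); rewrite ?upd_id. Qed.

Lemma line_of_mem i p q : q \in line i p -> line i q = line i p.
Proof.
case/imsetP => j _ ->; apply/setP => y.
by apply/imsetP/imsetP => -[k _ ->]; exists k; rewrite ?upd_upd.
Qed.

Lemma card_line i p : #|line i p| = n.
Proof.
rewrite card_imset ?card_ord // => j k /(congr1 (fun q : idx n E => q i)).
by rewrite !upd_eq.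
Qed.

Lemma card_nonzero_lines i x :
  muln #|[set l in lines n i | [exists y in l, x y != 0]]| n = dir_wt i x.
Proof.
set S := [set l in lines n i | _].
have S_line l : l \in S -> exists p, l = line i p.
  by rewrite inE => /andP[/imsetP[p _ ->] _]; exists p.
have coverS : finset.cover S = [set p | restr x i p != 0].
  apply/setP => p; rewrite inE restr_neq0.
  apply/finset.bigcupP/existsP => [[l lS pl]|[j xj]].
    have [q lq] := S_line l lS.
    move: lS; rewrite inE => /andP[_ /existsP[y /andP[yl xy]]].
    rewrite lq in pl yl; rewrite -(line_of_mem pl) in yl.
    by case/imsetP: yl => j _ ey; exists j; rewrite -ey.
  exists (line i p); last exact: line_self.
  rewrite inE; apply/andP; split; first by apply/imsetP; exists p.
  by apply/existsP; exists (upd p i j); rewrite xj andbT; apply/imsetP; exists j.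
have partS : finset.partition S (finset.cover S).
  apply/and3P; split => //.
    apply/finset.trivIsetP => _ _ /S_line[p ->] /S_line[q ->]; apply: contraR.
    case/pred0Pn => y /andP[/= yp yq].
    by rewrite -(line_of_mem yp) -(line_of_mem yq).
  by apply/negP => /S_line[p] /setP /(_ p); rewrite line_self inE.
rewrite /dir_wt -coverS (card_partition partS) -sum_nat_const.
by apply: eq_bigr => _ /S_line[p ->]; rewrite card_line.
Qed.

Lemma dnormE (R : realType) i x : dnorm R i x = (dir_wt i x)%:R / (n ^ E)%:R.
Proof.
rewrite /dnorm -card_nonzero_lines; case: (posnP n) => [n0|n_gt0].
  suff -> : #|[set l in lines n i | [exists y in l, x y != 0]]| = 0%N by rewrite !mul0r.
  apply: eq_card0 => l; rewrite inE; apply/negP => /andP[/imsetP[p _ _] _].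
  by case: (p i); rewrite n0.
have -> : (n ^ E = n ^ E.-1 * n)%N.
  by rewrite -expnSr prednK //; apply: leq_ltn_trans (ltn_ord i).
by rewrite !natrM -mulf_div divff ?mulr1 // pnatr_eq0 -lt0n.
Qed.

Definition decomposable_within (R : realType) (beta : R) (A : 'I_E -> {vspace 'rV[F]_n}) :=
  forall c, in_boxsum A c -> exists a : 'I_E -> word F n E,
    [/\ forall i, in_dir A i (a i), c = \sum_i a i &
        (\sum_i dir_wt i (a i))%:R <= beta * (wt c)%:R].

Lemma prod_expanding_decomposable (R : realType) (r : R) A :
  0 < r -> prod_expanding r A <-> decomposable_within r^-1 A.
Proof.
move=> r_gt0.
suff costE a c : (r * \sum_i dnorm R i (a i) <= rnorm R c) =
    ((\sum_i dir_wt i (a i))%:R <= r^-1 * (wt c)%:R).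
  split=> expA c /expA[a [Aa ca cost]]; exists a; split => //.
    by rewrite -costE.
  by rewrite costE.
have -> : \sum_i dnorm R i (a i) = (\sum_i dir_wt i (a i))%:R / (n ^ E)%:R.
  by rewrite natr_sum mulr_suml; apply: eq_bigr => i _; rewrite dnormE.
rewrite /rnorm -/(wt c); case: (posnP (n ^ E)) => [nE0|nE_gt0].
  have wt0 : (wt c = 0)%N by apply/eqP; rewrite -leqn0 -nE0 card_idx_set.
  have dir_wt0 : (\sum_i dir_wt i (a i) = 0)%N.
    by apply: big1 => i _; apply/eqP; rewrite -leqn0 -nE0 card_idx_set.
  by rewrite wt0 dir_wt0 !mul0r !mulr0 !lexx.
by rewrite mulrA ler_pM2r ?invr_gt0 ?ltr0n // ler_pdivlMl.
Qed.

Definition mx_along i0 (M : 'M[F]_n) x : word F n E :=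
  [ffun p => \sum_k x (upd p i0 k) * M k (p i0)].

Lemma restr_mx_along i0 M x p : restr (mx_along i0 M x) i0 p = restr x i0 p *m M.
Proof.
apply/rowP => j; rewrite !mxE ffunE upd_eq; apply: eq_bigr => k _.
by rewrite !mxE upd_upd.
Qed.

Lemma mx_alongD i0 M : {morph mx_along i0 M : x y / x + y}.
Proof.
move=> x y; apply/ffunP => p; rewrite !ffunE -big_split /=.
by apply: eq_bigr => k _; rewrite ffunE mulrDl.
Qed.

Lemma mx_along0 i0 M : mx_along i0 M 0 = 0.
Proof. by apply/ffunP => p; rewrite !ffunE big1 // => k _; rewrite ffunE mul0r. Qed.

Lemma mx_along_sum i0 M (I : finType) (G : I -> word F n E) :
  mx_along i0 M (\sum_k G k) = \sum_k mx_along i0 M (G k).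
Proof. exact: (big_morph (mx_along i0 M) (mx_alongD i0 M) (mx_along0 i0 M)). Qed.

Lemma in_dir_mx_along A i i0 M x :
  i != i0 -> in_dir A i x -> in_dir A i (mx_along i0 M x).
Proof.
move=> i_i0 Ax p.
have -> : restr (mx_along i0 M x) i p = \sum_k M k (p i0) *: restr x i (upd p i0 k).
  apply/rowP => j; rewrite !mxE ffunE summxE upd_neq 1?eq_sym //.
  by apply: eq_bigr => k _; rewrite !mxE mulrC updC.
by apply: memv_suml => k _; apply/memvZ/Ax.
Qed.

End Words.

Section FirstCoordinate.
Variables (F : finFieldType) (n m : nat).
Implicit Types (p : idx n m.+1) (q : idx n m) (x : word F n m.+1) (j : 'I_n).

Definition idx_cons j q : idx n m.+1 :=
  [ffun k => if unlift ord0 k is Some k' then q k' else j].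

Definition idx_tail p : idx n m := [ffun k => p (lift ord0 k)].

Lemma idx_cons0 j q : idx_cons j q ord0 = j.
Proof. by rewrite ffunE unlift_none. Qed.

Lemma idx_consK j q : idx_tail (idx_cons j q) = q.
Proof. by apply/ffunP => k; rewrite !ffunE liftK. Qed.

Lemma idx_tailK p : idx_cons (p ord0) (idx_tail p) = p.
Proof. by apply/ffunP => k; rewrite ffunE; case: unliftP => [k'|] ->; rewrite ?ffunE. Qed.

Lemma upd_idx_cons j q i k : upd (idx_cons j q) (lift ord0 i) k = idx_cons j (upd q i k).
Proof.
apply/ffunP => l; rewrite !ffunE; case: unliftP => [l'|] -> //=.
by rewrite !ffunE (inj_eq (@lift_inj _ ord0)).
Qed.

Lemma idx_tail_upd p i k : idx_tail (upd p (lift ord0 i) k) = upd (idx_tail p) i k.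
Proof. by apply/ffunP => l; rewrite !ffunE (inj_eq (@lift_inj _ ord0)). Qed.

Lemma card_set_idx_cons (P : pred (idx n m.+1)) :
  #|[set p | P p]| = (\sum_j #|[set q | P (idx_cons j q)]|)%N.
Proof.
rewrite -sum1_card (partition_big (fun p : idx n m.+1 => p ord0) predT) //=.
apply: eq_bigr => j _; rewrite -sum1_card.
rewrite (reindex (idx_cons j)) /=; last first.
  exists idx_tail => [q _|p]; rewrite ?idx_consK // inE => /andP[_ /eqP <-].
  by rewrite idx_tailK.
by apply: eq_bigl => q; rewrite !inE idx_cons0 eqxx andbT.
Qed.

Definition slice j x : word F n m := [ffun q => x (idx_cons j q)].

Definition stack (d : 'I_n -> word F n m) : word F n m.+1 :=
  [ffun p : idx n m.+1 => d (p ord0) (idx_tail p)].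

Lemma restr_slice j x i q : restr (slice j x) i q = restr x (lift ord0 i) (idx_cons j q).
Proof. by apply/rowP => k; rewrite !mxE ffunE upd_idx_cons. Qed.

Lemma restr_stack d i p :
  restr (stack d) (lift ord0 i) p = restr (d (p ord0)) i (idx_tail p).
Proof. by apply/rowP => k; rewrite !mxE ffunE upd_neq ?neq_lift // idx_tail_upd. Qed.

Lemma slice_sum j (I : finType) (G : I -> word F n m.+1) :
  slice j (\sum_k G k) = \sum_k slice j (G k).
Proof.
by apply/ffunP => q; rewrite ffunE !sum_ffunE; apply: eq_bigr => k _; rewrite ffunE.
Qed.

Lemma stack_sum (I : finType) (d : I -> 'I_n -> word F n m) :
  stack (fun j => \sum_k d k j) = \sum_k stack (d k).
Proof.
by apply/ffunP => p; rewrite ffunE !sum_ffunE; apply: eq_bigr => k _; rewrite ffunE.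
Qed.

Lemma sliceK x : stack (slice ^~ x) = x.
Proof. by apply/ffunP => p; rewrite !ffunE idx_tailK. Qed.

Lemma wt_slice x : wt x = (\sum_j wt (slice j x))%N.
Proof.
rewrite /wt card_set_idx_cons; apply: eq_bigr => j _.
by apply: eq_card => q; rewrite !inE ffunE.
Qed.

Lemma dir_wt_stack d i : dir_wt (lift ord0 i) (stack d) = (\sum_j dir_wt i (d j))%N.
Proof.
rewrite /dir_wt card_set_idx_cons; apply: eq_bigr => j _.
by apply: eq_card => q; rewrite !inE restr_stack idx_cons0 idx_consK.
Qed.

Lemma in_dir_slice (A : 'I_m.+1 -> {vspace 'rV[F]_n}) i j x :
  in_dir A (lift ord0 i) x -> in_dir (fun i => A (lift ord0 i)) i (slice j x).
Proof. by move=> Ax q; rewrite restr_slice. Qed.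

Lemma decomposable_stack (R : realType) (beta : R)
    (A : 'I_m.+1 -> {vspace 'rV[F]_n}) t :
  decomposable_within beta (fun i => A (lift ord0 i)) ->
  (forall j, in_boxsum (fun i => A (lift ord0 i)) (slice j t)) ->
  exists d : 'I_m -> word F n m.+1,
    [/\ forall i, in_dir A (lift ord0 i) (d i), t = \sum_i d i &
        (\sum_i dir_wt (lift ord0 i) (d i))%:R <= beta * (wt t)%:R].
Proof.
move=> decA /(_ _) /decA slices; have [d dP] := choice slices.
exists (fun i => stack (d ^~ i)); split.
- by move=> i p; rewrite restr_stack; case: (dP (p ord0)) => Ad _ _; apply: Ad.
- rewrite -stack_sum -[LHS]sliceK; congr stack; apply: funext => j.
  by case: (dP j).
under eq_bigr do rewrite dir_wt_stack.
rewrite exchange_big wt_slice natr_sum mulr_sumr natr_sum; apply: ler_sum => j _.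
by case: (dP j) => _ _; rewrite natr_sum.
Qed.

End FirstCoordinate.

Lemma tail_codesE (F : finFieldType) (n m : nat) (C : 'I_m.+1 -> {vspace 'rV[F]_n}) :
  tail_codes C = fun i => C (lift ord0 i).
Proof. by apply: funext => i; congr C; apply: val_inj. Qed.

Definition proj_compl (F : fieldType) (n : nat) (U : {vspace 'rV[F]_n}) : 'M[F]_n :=
  1%:M - lin1_mx (projv U).

Lemma mul_proj_compl (F : fieldType) (n : nat) (U : {vspace 'rV[F]_n}) v :
  v *m proj_compl U = v - projv U v.
Proof. by rewrite mulmxBr mulmx1 mul_rV_lin1. Qed.

Section Subcode.
Variables (F : finFieldType) (n m : nat).
Variables (C : 'I_m.+1 -> {vspace 'rV[F]_n}) (C1' : {vspace 'rV[F]_n}).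
Hypothesis C1'_sub : (C1' <= C ord0)%VS.

Local Notation C' := (replace_first C C1').
Local Notation tailC := (fun i => C (lift ord0 i)).

Lemma in_dir_replace_first i (x : word F n m.+1) : in_dir C' i x -> in_dir C i x.
Proof.
move=> C'x p; case: (unliftP ord0 i) (C'x p) => [i'|] -> //.
exact: subvP.
Qed.

Lemma boxsum_slices_mx_along M (x : 'I_m -> word F n m.+1) j :
  (forall i, in_dir C (lift ord0 i) (x i)) ->
  in_boxsum tailC (slice j (mx_along ord0 M (\sum_i x i))).
Proof.
move=> Cx; exists (fun i => slice j (mx_along ord0 M (x i))); split.
  by move=> i; apply/in_dir_slice/in_dir_mx_along; rewrite // eq_sym neq_lift.
by rewrite mx_along_sum slice_sum.
Qed.

Lemma first_component_split (b a : 'I_m.+1 -> word F n m.+1) :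
  (forall i, in_dir C' i (b i)) -> \sum_i b i = \sum_i a i ->
  (forall i, in_dir C i (a i)) ->
  exists t : word F n m.+1,
    [/\ in_dir C' ord0 (a ord0 - t),
        forall p, restr (a ord0) ord0 p = 0 -> restr t ord0 p = 0 &
        forall j, in_boxsum tailC (slice j t)].
Proof.
move=> C'b ba Ca; exists (mx_along ord0 (proj_compl C1') (a ord0)); split.
- by move=> p; rewrite restrB restr_mx_along mul_proj_compl opprB addrC subrK memv_proj.
- by move=> p a0; rewrite restr_mx_along mul_proj_compl a0 linear0 subr0.
have b0_killed : mx_along ord0 (proj_compl C1') (b ord0) = 0.
  apply/ffunP => p; rewrite -(restr_self _ ord0) restr_mx_along mul_proj_compl.
  by rewrite projv_id ?subrr ?mxE ?ffunE //; apply: C'b.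
have -> : a ord0 = b ord0 + \sum_i (b (lift ord0 i) - a (lift ord0 i)).
  by move: ba; rewrite !big_ord_recl sumrB addrA => ->; rewrite addrK.
move=> j; rewrite mx_alongD b0_killed add0r; apply: boxsum_slices_mx_along => i p.
by rewrite restrB; apply: memvB; [apply: C'b | apply: Ca].
Qed.

Lemma decomposable_replace_first (R : realType) (alpha beta : R) :
  0 <= beta -> decomposable_within alpha C -> decomposable_within beta (tail_codes C) ->
  decomposable_within (alpha * (1 + beta)) C'.
Proof.
rewrite tail_codesE => beta_ge0 decC decT _ [b [C'b ->]].
have [a [Ca ba costA]] : exists a : 'I_m.+1 -> word F n m.+1,
    [/\ forall i, in_dir C i (a i), \sum_i b i = \sum_i a i &
        (\sum_i dir_wt i (a i))%:R <= alpha * (wt (\sum_i b i))%:R].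
  by apply: decC; exists b; split => // i; apply: in_dir_replace_first.
have [t [C't t_supp t_slices]] := first_component_split C'b ba Ca.
have [d [Cd td costD]] := decomposable_stack decT t_slices.
pose e i := if unlift ord0 i is Some i' then a i + d i' else a ord0 - t.
exists e; split.
- move=> i p; rewrite /e; case: (unliftP ord0 i) => [i'|] -> //.
  by rewrite restrD; apply: memvD; [apply: Ca | apply: Cd].
- rewrite ba !big_ord_recl /e unlift_none; under [in RHS]eq_bigr do rewrite liftK.
  by rewrite big_split /= -td addrACA addNr addr0.
set S := (\sum_i dir_wt i (a i))%N in costA.
set X := (\sum_i dir_wt (lift ord0 i) (d i))%N in costD.
have cost_e : (\sum_i dir_wt i (e i) <= S + X)%N.
  rewrite /S /X !big_ord_recl /e unlift_none -addnA -big_split /=.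
  apply: leq_add; first by apply: dir_wt_supp => p a0; rewrite restrB a0 t_supp ?subr0.
  by apply: leq_sum => i _; rewrite liftK dir_wtD.
have costX : X%:R <= beta * S%:R.
  apply: le_trans costD (ler_wpM2l beta_ge0 _); rewrite ler_nat.
  apply: leq_trans (wt_le_dir_wt ord0 t) _; apply: leq_trans (dir_wt_supp t_supp) _.
  by rewrite /S big_ord_recl leq_addr.
apply: le_trans (_ : S%:R + X%:R <= _); first by rewrite -natrD ler_nat.
apply: le_trans (_ : (1 + beta) * S%:R <= _); first by rewrite mulrDl mul1r lerD2l.
by rewrite [alpha * _]mulrC -mulrA ler_wpM2l // addr_ge0.
Qed.

End Subcode.

Section ExtendedReals.
Variable R : realType.
Implicit Types (x y : \bar R).
Local Open Scope ereal_scope.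

Lemma lte_fin_gap (w : R) x : w%:E < x -> exists2 e : R, (0 < e)%R & (w + e)%:E < x.
Proof.
case: x => [g| |] //; last by exists 1%R; rewrite ?ltry.
rewrite lte_fin => wg; exists ((g - w) / 2)%R; rewrite ?lte_fin; lra.
Qed.

Lemma lee_fin_approx x y :
  (forall z : R, (0 < z)%R -> z%:E < x -> z%:E <= y) -> 0 <= y -> x <= y.
Proof.
move=> approx y_ge0; rewrite leNgt; apply/negP => yx.
case: y y_ge0 yx approx => [s| |] //; last by move=> _; rewrite ltNge leey.
rewrite lee_fin => s_ge0 /lte_fin_gap [e e_gt0 sex] approx.
have : (s + e <= s)%R by rewrite -lee_fin; apply: approx => //; lra.
lra.
Qed.

Lemma ratio_approx_fin x y (z b0 : R) : (0 < z)%R -> (0 <= b0)%R ->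
  (forall beta : R, (b0 < beta)%R -> beta^-1%:E < y) -> z%:E < x / (1 + b0)%:E ->
  exists beta : R, [/\ (0 < beta)%R, beta^-1%:E < y & (z * (1 + beta))%:E < x].
Proof.
move=> z_gt0 b0_ge0 b0y; have b0_gt0 : (0 < 1 + b0)%R by lra.
rewrite inver gt_eqF // lte_pdivlMr // -EFinM.
case/lte_fin_gap => e e_gt0 zx; exists (b0 + e / z)%R; split.
- by rewrite ltr_wpDl // divr_gt0.
- by apply: b0y; rewrite ltrDl divr_gt0.
suff -> : (z * (1 + (b0 + e / z)) = z * (1 + b0) + e)%R by [].
by rewrite addrA mulrDr mulrCA divff ?gt_eqF ?mulr1.
Qed.

Lemma ratio_approx x y (z : R) : 0 <= y -> (0 < z)%R -> z%:E < x / (1 + y^-1) ->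
  exists beta : R, [/\ (0 < beta)%R, beta^-1%:E < y & (z * (1 + beta))%:E < x].
Proof.
move=> y_ge0 z_gt0; case: y y_ge0 => [s| |] //; last first.
  move=> _; rewrite invey adde0 => zx.
  by apply: (ratio_approx_fin (b0 := 0)) => [||*|]; rewrite ?ltry ?addr0.
rewrite lee_fin le_eqVlt => /predU1P[<-|s_gt0].
  by rewrite inve0 addey // invey mule0 lte_fin ltNge ltW.
rewrite inver gt_eqF //; apply: ratio_approx_fin; rewrite ?invr_ge0 ?ltW // => beta sb.
by rewrite lte_fin invf_plt ?posrE // (lt_trans _ sb) ?invr_gt0.
Qed.

End ExtendedReals.

Section ExpansionConstant.
Variables (F : finFieldType) (R : realType) (n E : nat).
Implicit Types (A : 'I_E -> {vspace 'rV[F]_n}) (r x : R).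

Lemma prod_expanding_le r x A : x <= r -> prod_expanding r A -> prod_expanding x A.
Proof.
move=> xr expA c /expA[a [Aa ca cost]]; exists a; split => //.
apply: le_trans cost; apply: ler_wpM2r xr; apply: sumr_ge0 => i _.
by rewrite /dnorm divr_ge0.
Qed.

Lemma prod_expanding0 A : prod_expanding (0 : R) A.
Proof.
by move=> c [a [Aa ca]]; exists a; split; rewrite // mul0r /rnorm divr_ge0.
Qed.

Lemma rho_pe_ge r A : prod_expanding r A -> (r%:E <= rho_pe R A)%E.
Proof. by move=> expA; apply: ereal_sup_ubound; exists r. Qed.

Lemma rho_pe_ge0 A : (0 <= rho_pe R A)%E.
Proof. exact/rho_pe_ge/prod_expanding0. Qed.

Lemma prod_expanding_lt_rho x A : (x%:E < rho_pe R A)%E -> prod_expanding x A.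
Proof.
case/ereal_sup_gt => _ [r expA <-]; rewrite lte_fin => /ltW xr.
exact: prod_expanding_le expA.
Qed.

End ExpansionConstant.

Theorem lemma1 (F : finFieldType) (R : realType) (hF : 2%N \in [pchar F])
  (n D : nat) (hD : (2 <= D)%N) (C : 'I_D -> {vspace 'rV[F]_n})
  (C1' : {vspace 'rV[F]_n}) (i0 : 'I_D) (hi0 : val i0 = 0%N)
  (hsub : (C1' <= C i0)%VS) :
  (rho_pe R (C : 'I_D -> _) / (1 + (rho_pe R (tail_codes C))^-1)
     <= rho_pe R (replace_first C C1'))%E.
Proof.
case: D hD C i0 hi0 hsub => [//|m] _ C i0 hi0.
have -> : i0 = ord0 by apply: val_inj.
move=> C1'_sub; apply: lee_fin_approx (rho_pe_ge0 _ _) => z z_gt0.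
case/(ratio_approx (rho_pe_ge0 _ _) z_gt0) => beta [beta_gt0].
move=> /prod_expanding_lt_rho expT /prod_expanding_lt_rho expC.
have zb_gt0 : 0 < z * (1 + beta) by rewrite mulr_gt0 // addr_gt0.
have decT : decomposable_within beta (tail_codes C).
  by rewrite -[beta]invrK; apply/prod_expanding_decomposable; rewrite ?invr_gt0.
have := decomposable_replace_first C1'_sub (ltW beta_gt0)
  ((prod_expanding_decomposable _ zb_gt0).1 expC) decT.
rewrite invfM -mulrA mulVf ?mulr1 ?gt_eqF ?addr_gt0 // => decC'.
by apply/rho_pe_ge/(prod_expanding_decomposable _ z_gt0).
Qed.
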